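(* Let $\mathcal H_{\rm R}$ be the Hilbert space of a single quantum harmonic oscillator with annihilation and creation operators $a,a^\dagger$, $[a,a^\dagger]=\mathbb 1$, let $h_{\rm R}=\Omega_{\rm R}a^\dagger a$ with $\Omega_{\rm R}>0$, and let $v_2=\nu a^\dagger a$ with $\nu\in\mathbb R$. Let $\omega_{\rm R}$ be a state on $\mathcal H_{\rm R}$ such that $\omega_{\rm R}\big((a^\dagger a)^k\big)\le c^k$ for all $k\in\mathbb N$, for some constant $c$, and let $\omega_{{\rm R},M}=\omega_{\rm R}^{\otimes M}$. Set $\overline V_{{\rm R},M}(t)=\frac1M\sum_{m=1}^M\big(e^{ith_{\rm R}}v_2e^{-ith_{\rm R}}\big)^{[m]}$. Then for all $n\in\mathbb N$ and $t_1,\dots,t_n\ge0$, $$\sup_{M\in\mathbb N}\big|\omega_{{\rm R},M}\big(\overline V_{{\rm R},M}(t_1)\cdots\overline V_{{\rm R},M}(t_n)\big)\big|\le (c|\nu|)^n.$$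
   Context: $X^{[m]}$ denotes the operator on $\mathcal H_{\rm R}^{\otimes M}$ acting as $X$ on the $m$-th factor and trivially elsewhere; $\omega_{\rm R}^{\otimes M}$ is the $M$-fold product state. *)

From HB Require Import structures.
From mathcomp Require Import all_boot all_order all_algebra.
From mathcomp Require Import complex.
From mathcomp Require Import all_classical all_reals all_analysis.
Set Implicit Arguments. Unset Strict Implicit. Unset Printing Implicit Defensive.
Import Order.TTheory GRing.Theory Num.Theory.
Import numFieldNormedType.Exports.
Local Open Scope classical_set_scope.
Local Open Scope ring_scope.

(* Operators on a Hilbert space l^2(I) with a countable orthonormal basis    *)
(* (e_i)_{i : I}, restricted to the dense invariant domain of finitely       *)
(* supported vectors.  An operator is given by its columns: [A j] is the     *)
(* finite formal combination  A e_j = sum_{(i,x) in A j} x e_i.              *)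
(* Every operator appearing in the statement (polynomials in a, a^dagger,    *)
(* the free evolution e^{ith}, and their tensor embeddings) preserves this   *)
(* domain.                                                                   *)
Definition op (I : Type) (C : Type) := I -> seq (I * C).

Section Ops.
Variables (I : eqType) (C : pzRingType).
Definition opid : op I C := fun j => [:: (j, 1)].
Definition opzero : op I C := fun _ => [::].
Definition opadd (A B : op I C) : op I C := fun j => A j ++ B j.
Definition opscale (s : C) (A : op I C) : op I C :=
  fun j => [seq (p.1, s * p.2) | p <- A j].
Definition opmul (A B : op I C) : op I C :=
  fun j => flatten [seq [seq (p.1, p.2 * q.2) | p <- A q.1] | q <- B j].
Definition opexp (A : op I C) (k : nat) : op I C := iter k (opmul A) opid.
Definition entry (A : op I C) (i j : I) : C := \sum_(p <- A j | p.1 == i) p.2.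
End Ops.

Section Oscillator.
Variable R : realType.
Local Notation C := R[i].

(* single mode: basis e_n, n : nat (number basis) *)
Definition ann : op nat C := fun n => [:: (n.-1, (Num.sqrt (n%:R : R))%:C%C)].
Definition cre : op nat C := fun n => [:: (n.+1, (Num.sqrt (n.+1%:R : R))%:C%C)].
Definition numop : op nat C := opmul cre ann.

Definition expi (x : R) : C := Complex (cos x) (sin x).

(* Functional calculus e^{itH} for an operator H that is diagonal in the     *)
(* basis with real diagonal entries (as is h_R = Omega a^dagger a):          *)
(* e^{itH} e_j = e^{i t H_jj} e_j.                                           *)
Definition expi_diag (I : eqType) (t : R) (H : op I C) : op I C :=
  fun j => [:: (j, expi (t * complex.Re (entry H j j)))].

Definition heis (I : eqType) (t : R) (H X : op I C) : op I C :=
  opmul (opmul (expi_diag t H) X) (expi_diag (- t) H).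

(* M modes: basis indexed by occupation numbers j : 'I_M -> nat *)
Definition idx (M : nat) := {ffun 'I_M -> nat}.
Definition setidx M (j : idx M) (m : 'I_M) (k : nat) : idx M :=
  [ffun l => if l == m then k else j l].
(* X^{[m]} : X acting on the m-th factor, identity elsewhere *)
Definition embed M (m : 'I_M) (X : op nat C) : op (idx M) C :=
  fun j => [seq (setidx j m p.1, p.2) | p <- X (j m)].
Definition opsum (I : eqType) (s : seq (op I C)) : op I C := foldr (@opadd I C) (@opzero I C) s.

(* Density matrices (normal states) on l^2(nat): rho i j = <e_i, rho e_j>, *)
(* positive semidefinite, with trace 1.                                    *)
Definition is_density (rho : nat -> nat -> C) : Prop :=
  (forall x : seq (nat * C),
      0 <= \sum_(p <- x) \sum_(q <- x) (p.2)^* * rho p.1 q.1 * q.2) /\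
  ((fun K => \sum_(j < K) complex.Re (rho j j)) @ \oo --> (1 : R)).

Definition rho_prod M (rho : nat -> nat -> C) (i j : idx M) : C :=
  \prod_(m < M) rho (i m) (j m).

Definition box1 (K : nat) : seq nat := iota 0 K.
Definition boxM M (K : nat) : seq (idx M) :=
  [seq [ffun m => nat_of_ord (f m)] | f : {ffun 'I_M -> 'I_K} <- enum {ffun 'I_M -> 'I_K}].

(* omega(X) = Tr(rho X) = sum_j sum_i rho_{ji} X_{ij}, as the limit of sums   *)
(* over the finite exhaustion [box K] of the basis; [expect_is rho box X z]  *)
(* says that this trace exists and equals z.                               *)
Definition trace_partial (I : eqType) (rho : I -> I -> C) (box : nat -> seq I)
    (X : op I C) (K : nat) : C :=
  \sum_(j <- box K) \sum_(p <- X j) rho j p.1 * p.2.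
Definition expect_is (I : eqType) (rho : I -> I -> C) (box : nat -> seq I)
    (X : op I C) (z : C) : Prop :=
  ((fun K => complex.Re (trace_partial rho box X K)) @ \oo --> complex.Re z) /\
  ((fun K => complex.Im (trace_partial rho box X K)) @ \oo --> complex.Im z).

Arguments idx M : clear implicits.
Definition Vbar (Omega nu : R) (M : nat) (t : R) : op (idx M) C :=
  opscale ((M%:R : R)^-1)%:C%C
    (opsum [seq embed m (heis t (opscale Omega%:C%C numop) (opscale nu%:C%C numop))
           | m <- enum 'I_M]).

(* ordered product  A_0 A_1 ... A_{n-1} *)
Definition opprod (I : eqType) n (A : 'I_n -> op I C) : op I C :=
  foldr (@opmul I C) (@opid I C) [seq A k | k <- enum 'I_n].

End Oscillator.
Arguments Vbar [R] Omega nu M t _.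

(** All operators in the statement are diagonal in the number basis.  The
    free evolution e^{ith_R} is a diagonal unitary, so conjugating the
    diagonal operator v_2 by it does nothing, and bar V_{R,M}(t_k) is
    multiplication by (nu/M) (j_1 + ... + j_M) on the basis vector e_j,
    whatever t_k.  The expectation of the product is therefore the n-th
    moment of (nu/M) N, where N = N_1 + ... + N_M is a sum of M independent
    copies of the number operator under the product state.  Expanding N^n
    into the M^n words of length n in the letters 1, ..., M, each word
    contributes a product of single-mode moments omega_R(N_m^e) with
    exponents summing to n, hence at most c^n; so the moment is at most
    (M c)^n and the normalised one at most (c |nu|)^n. *)

From HB Require Import structures.
From mathcomp Require Import all_boot all_order all_algebra.
From mathcomp Require Import complex.
From mathcomp Require Import all_classical all_reals all_analysis.
Import Order.TTheory GRing.Theory Num.Theory.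
Import numFieldNormedType.Exports.
Set Implicit Arguments. Unset Strict Implicit.
Local Open Scope classical_set_scope.
Local Open Scope ring_scope.

Section DiagonalOperators.
Variables (I : eqType) (C : pzRingType).
Implicit Types (A B : op I C) (d e : I -> C).

(* [A] maps e_j to d j e_j.  A column is only a formal combination, possibly
   with repeated or zero terms, so it is compared with d j e_j through every
   linear functional g. *)
Definition diag_op A d :=
  forall (g : I -> C) j, \sum_(p <- A j) g p.1 * p.2 = g j * d j.

Lemma eq_diag_op A d e : d =1 e -> diag_op A d -> diag_op A e.
Proof. by move=> de hA g j; rewrite hA de. Qed.

Lemma diag_opid : diag_op (@opid I C) (fun=> 1).
Proof. by move=> g j; rewrite big_seq1. Qed.

Lemma diag_opzero : diag_op (@opzero I C) (fun=> 0).
Proof. by move=> g j; rewrite big_nil mulr0. Qed.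

Lemma diag_opadd A B d e : diag_op A d -> diag_op B e ->
  diag_op (opadd A B) (fun j => d j + e j).
Proof. by move=> hA hB g j; rewrite big_cat hA hB mulrDr. Qed.

Lemma diag_opmul A B d e : diag_op A d -> diag_op B e ->
  diag_op (opmul A B) (fun j => d j * e j).
Proof.
move=> hA hB g j; rewrite big_flatten /= big_map.
have columnA q : \sum_(p <- [seq (p.1, p.2 * q.2) | p <- A q.1]) g p.1 * p.2
                 = g q.1 * d q.1 * q.2.
  by rewrite big_map -hA mulr_suml; apply: eq_bigr => p _; rewrite mulrA.
under eq_bigr => q _ do rewrite columnA.
by rewrite (hB (fun i => g i * d i)) mulrA.
Qed.

Lemma diag_opexp A d k : diag_op A d -> diag_op (opexp A k) (fun j => d j ^+ k).
Proof.
move=> hA; elim: k => [|k IH].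
  by apply: eq_diag_op diag_opid => j; rewrite expr0.
by apply: eq_diag_op (diag_opmul hA IH) => j; rewrite exprS.
Qed.

End DiagonalOperators.

Lemma diag_opscale (I : eqType) (C : comPzRingType) s (A : op I C) d :
  diag_op A d -> diag_op (opscale s A) (fun j => s * d j).
Proof.
move=> hA g j; rewrite big_map /=.
under eq_bigr => p _ do rewrite mulrCA.
by rewrite -mulr_sumr hA mulrCA.
Qed.

Lemma prodr_comp_fibers (R : comPzSemiRingType) n M (s : 'I_n -> 'I_M)
    (y : 'I_M -> R) :
  \prod_(i < n) y (s i) = \prod_(m < M) y m ^+ #|[pred i | s i == m]|.
Proof.
rewrite (partition_big s predT) //=; apply: eq_bigr => m _.
rewrite (eq_bigr (fun=> y m)); last by move=> i /eqP ->.
by rewrite prodr_const.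
Qed.

Lemma sum_card_fibers n M (s : 'I_n -> 'I_M) :
  (\sum_(m < M) #|[pred i | s i == m]|)%N = n.
Proof.
under eq_bigr do rewrite -sum1_card.
rewrite (exchange_big_dep predT) //= -[RHS]card_ord -sum1_card.
by apply: eq_bigr => i _; rewrite (big_pred1 (s i)) // => m /=; rewrite eq_sym.
Qed.

Section SumMoments.
Variable R : realType.
Implicit Types (r A : nat -> R) (c : R).

Definition moment_trunc r e K := \sum_(j < K) r j * j%:R ^+ e.

Definition sum_moment_trunc r M n K :=
  \sum_(f : {ffun 'I_M -> 'I_K})
     (\prod_(m < M) r (f m)) * (\sum_(m < M) (f m)%:R) ^+ n.

(* The n-th moment of a sum of M independent variables with moments A,
   expanded over the words s of length n in M letters. *)
Definition sum_moment A M n :=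
  \sum_(s : {ffun 'I_n -> 'I_M}) \prod_(m < M) A #|[pred i | s i == m]|.

Lemma sum_moment_truncE r M n K :
  sum_moment_trunc r M n K = sum_moment (moment_trunc r ^~ K) M n.
Proof.
have powerE (x : 'I_M -> R) :
    (\sum_(m < M) x m) ^+ n
    = \sum_(s : {ffun 'I_n -> 'I_M}) \prod_(i < n) x (s i).
  by rewrite -[in LHS](card_ord n) -prodr_const bigA_distr_bigA.
rewrite /sum_moment_trunc /sum_moment.
under eq_bigr => f _ do rewrite powerE mulr_sumr.
rewrite exchange_big /=; apply: eq_bigr => s _.
rewrite /moment_trunc bigA_distr_bigA /=; apply: eq_bigr => f _.
by rewrite (prodr_comp_fibers s (fun m => (f m)%:R)) -big_split.
Qed.

Lemma cvg_sum_moment_trunc r A M n :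
  (forall e, moment_trunc r e @ \oo --> A e) ->
  sum_moment_trunc r M n @ \oo --> sum_moment A M n.
Proof.
move=> cvgA; rewrite (funext (sum_moment_truncE r M n)).
apply: cvg_big => [|s _]; first exact: add_continuous.
apply: cvg_big => [|m _]; [exact: mul_continuous | exact: cvgA].
Qed.

Lemma cvg_moment_trunc_ge0 r e a :
  (forall j, 0 <= r j) -> moment_trunc r e @ \oo --> a -> 0 <= a.
Proof.
move=> r_ge0 cvg_a; apply: (cvgr_to_ge cvg_a); apply: nearW => K.
by apply: sumr_ge0 => j _; rewrite mulr_ge0 ?exprn_ge0.
Qed.

Lemma sum_moment_ge0 A M n : (forall e, 0 <= A e) -> 0 <= sum_moment A M n.
Proof. by move=> A_ge0; apply: sumr_ge0 => s _; apply: prodr_ge0. Qed.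

Lemma sum_moment_le A c M n : (forall e, 0 <= A e <= c ^+ e) ->
  sum_moment A M n <= (M%:R * c) ^+ n.
Proof.
move=> A_bound; apply: (@le_trans _ _ (\sum_(s : {ffun 'I_n -> 'I_M}) c ^+ n)).
  apply: ler_sum => s _.
  rewrite -[in X in _ <= X](sum_card_fibers s) -prodrXr.
  by apply: ler_prod => m _; exact: A_bound.
by rewrite sumr_const card_ffun !card_ord exprMn -natrX mulr_natl.
Qed.

Lemma normr_mean_sum_moment_le A c nu M n : (0 < M)%N ->
  (forall e, 0 <= A e <= c ^+ e) ->
  `|((M%:R)^-1 * nu) ^+ n * sum_moment A M n| <= (c * `|nu|) ^+ n.
Proof.
move=> M_gt0 A_bound.
have A_ge0 e : 0 <= A e by have /andP[] := A_bound e.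
have M_neq0 : M%:R != 0 :> R by rewrite pnatr_eq0 -lt0n.
have -> : (c * `|nu|) ^+ n = `|(M%:R)^-1 * nu| ^+ n * (M%:R * c) ^+ n.
  by rewrite -exprMn normrM normfV normr_nat mulrACA mulVf // mul1r mulrC.
rewrite normrM normrX [`|sum_moment _ _ _|]ger0_norm ?sum_moment_ge0 //.
by apply: ler_wpM2l; [rewrite exprn_ge0 | exact: sum_moment_le].
Qed.

End SumMoments.

Section Oscillator.
Variable R : realType.
Local Notation C := R[i].

Lemma diag_opsum (I : eqType) (T : Type) (X : T -> op I C) d (s : seq T) :
  (forall x, diag_op (X x) (d x)) ->
  diag_op (opsum [seq X x | x <- s]) (fun j => \sum_(x <- s) d x j).
Proof.
move=> hX; elim: s => [|x s IH].
  by apply: eq_diag_op (@diag_opzero _ _) => j; rewrite big_nil.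
by apply: eq_diag_op (diag_opadd (hX x) IH) => j; rewrite big_cons.
Qed.

Lemma diag_opprod (I : eqType) n (A : 'I_n -> op I C) d :
  (forall k, diag_op (A k) (d k)) ->
  diag_op (opprod A) (fun j => \prod_(k < n) d k j).
Proof.
move=> hA; apply: (@eq_diag_op _ _ _ (fun j => \prod_(k <- enum 'I_n) d k j)).
  by move=> j; rewrite big_enum.
rewrite /opprod; elim: (enum 'I_n) => [|k s IH].
  by apply: eq_diag_op (@diag_opid _ _) => j; rewrite big_nil.
by apply: eq_diag_op (diag_opmul (hA k) IH) => j; rewrite big_cons.
Qed.

Lemma setidx_id M (j : idx M) m : setidx j m (j m) = j.
Proof. by apply/ffunP => l; rewrite ffunE; case: eqP => // ->. Qed.

Lemma diag_embed M (m : 'I_M) (X : op nat C) d :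
  diag_op X d -> diag_op (embed m X) (fun j => d (j m)).
Proof.
by move=> hX g j; rewrite big_map /= (hX (fun k => g (setidx j m k))) setidx_id.
Qed.

Lemma mul_expiN (x : R) : expi x * expi (- x) = 1.
Proof.
rewrite /expi cosN sinN; apply/eqP; rewrite eq_complex /=.
by rewrite mulrN opprK -!expr2 cos2Dsin2 mulrN mulrC addrC subrr !eqxx.
Qed.

Lemma diag_expi_diag (I : eqType) t (H : op I C) :
  diag_op (expi_diag t H) (fun j => expi (t * complex.Re (entry H j j))).
Proof. by move=> g j; rewrite big_seq1. Qed.

Lemma diag_heis (I : eqType) t (H X : op I C) d :
  diag_op X d -> diag_op (heis t H X) d.
Proof.
move=> hX; apply: eq_diag_op
  (diag_opmul (diag_opmul (diag_expi_diag t H) hX) (diag_expi_diag (- t) H)) => j.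
by rewrite mulNr mulrAC mul_expiN mul1r.
Qed.

Lemma diag_numop : diag_op (numop R) (fun j => (j%:R : R)%:C%C).
Proof.
move=> g [|j]; rewrite /numop /opmul /= big_cons big_nil addr0 /=.
  by rewrite sqrtr0 !mulr0.
by rewrite -rmorphM /= -expr2 sqr_sqrtr ?ler0n.
Qed.

Lemma diag_Vbar (Omega nu : R) M (t : R) :
  diag_op (Vbar Omega nu M t)
    (fun j => ((M%:R)^-1 * (nu * \sum_(m < M) (j m)%:R))%:C%C).
Proof.
apply: eq_diag_op (diag_opscale _ (diag_opsum _ (fun m => diag_embed m
   (diag_heis _ _ (diag_opscale nu%:C%C diag_numop))))) => j.
rewrite !rmorphM rmorph_sum big_enum /=; congr (_ * _).
by rewrite mulr_sumr; apply: eq_bigl.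
Qed.

Lemma diag_opprod_Vbar (Omega nu : R) M n (t : 'I_n -> R) :
  diag_op (opprod (fun k => Vbar Omega nu M (t k)))
    (fun j => (((M%:R)^-1 * (nu * \sum_(m < M) (j m)%:R)) ^+ n)%:C%C).
Proof.
apply: eq_diag_op (diag_opprod (fun k => diag_Vbar Omega nu (t k))) => j.
by rewrite prodr_const card_ord rmorphXn.
Qed.

Lemma trace_partial_diag (I : eqType) (rho : I -> I -> C) box X d K :
  diag_op X d -> trace_partial rho box X K = \sum_(j <- box K) rho j j * d j.
Proof. by move=> hX; apply: eq_bigr => j _; exact: hX. Qed.

Lemma expect_is_real_cvg (I : eqType) (rho : I -> I -> C) box X z
    (u : nat -> R) :
  (forall K, trace_partial rho box X K = (u K)%:C%C) ->
  expect_is rho box X z -> u @ \oo --> complex.Re z.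
Proof.
move=> hu [cvg_Re _].
by have -> : u = fun K => complex.Re (trace_partial rho box X K)
  by apply: funext => K; rewrite hu.
Qed.

Lemma cvg_expect_is_real (I : eqType) (rho : I -> I -> C) box X
    (u : nat -> R) (a : R) :
  (forall K, trace_partial rho box X K = (u K)%:C%C) ->
  u @ \oo --> a -> expect_is rho box X a%:C%C.
Proof.
move=> hu cvg_a; split; under eq_fun do rewrite hu /=.
  exact: cvg_a.
exact: cvg_cst.
Qed.

Lemma normc_real (x : R) : Normc.normc x%:C%C = `|x|.
Proof. by rewrite /Normc.normc /= expr0n /= addr0 sqrtr_sqr. Qed.

Lemma density_diag_real (rho : nat -> nat -> C) l : is_density rho ->
  rho l l = (complex.Re (rho l l))%:C%C /\ 0 <= complex.Re (rho l l).
Proof.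
case=> /(_ [:: (l, 1)]) + _; rewrite !big_seq1 /= mulr1.
case: (rho l l) => a b; rewrite lecE /= !mul1r oppr0 !mul0r subr0 addr0.
by case/andP => /eqP -> a_ge0.
Qed.

Lemma trace_partial_numop_exp (rho : nat -> nat -> C) (r : nat -> R) e K :
  (forall l, rho l l = (r l)%:C%C) ->
  trace_partial rho (@box1) (opexp (numop R) e) K = (moment_trunc r e K)%:C%C.
Proof.
move=> rho_diag; rewrite (trace_partial_diag _ _ _ (diag_opexp e diag_numop)).
have -> : box1 K = index_iota 0 K by rewrite /index_iota subn0.
rewrite /moment_trunc rmorph_sum big_mkord.
by apply: eq_bigr => j _; rewrite rho_diag rmorphM rmorphXn.
Qed.

Lemma trace_partial_opprod_Vbar (rho : nat -> nat -> C) (r : nat -> R)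
    (Omega nu : R) M n (t : 'I_n -> R) K :
  (forall l, rho l l = (r l)%:C%C) ->
  trace_partial (rho_prod rho) (@boxM M)
    (opprod (fun k => Vbar Omega nu M (t k))) K
  = (((M%:R)^-1 * nu) ^+ n * sum_moment_trunc r M n K)%:C%C.
Proof.
move=> rho_diag; rewrite (trace_partial_diag _ _ _ (diag_opprod_Vbar Omega nu t)).
rewrite big_map big_enum /= /sum_moment_trunc mulr_sumr rmorph_sum.
apply: eq_bigr => f _; rewrite /rho_prod.
under eq_bigr => m _ do rewrite ffunE.
under [\prod_(m < M) _]eq_bigr => m _ do rewrite ffunE rho_diag.
by rewrite -rmorph_prod -rmorphM mulrA exprMn mulrCA.
Qed.

End Oscillator.

Unset Implicit Arguments.

Theorem proposition4 (R : realType) (Omega nu c : R) (rho : nat -> nat -> R[i])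
  (hOmega : 0 < Omega)
  (hrho : is_density rho)
  (hmom : forall k : nat, exists z : R[i],
      expect_is rho (@box1) (opexp (numop R) k) z /\ z <= ((c ^+ k)%:C)%C) :
  forall (n : nat) (t : 'I_n -> R), (forall k, 0 <= t k) ->
  forall M : nat, (0 < M)%N ->
  exists z : R[i],
    expect_is (@rho_prod R M rho) (@boxM M)
      (opprod (fun k => Vbar Omega nu M (t k))) z /\
    Normc.normc z <= (c * `|nu|) ^+ n.
Proof.
move=> n t _ M M_gt0.
pose r l := complex.Re (rho l l).
have rho_diag l : rho l l = (r l)%:C%C := (density_diag_real l hrho).1.
have r_ge0 l : 0 <= r l := (density_diag_real l hrho).2.
have [Z hZ] := choice hmom.
pose A e := complex.Re (Z e).
have cvgA e : moment_trunc r e @ \oo --> A e.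
  by apply: expect_is_real_cvg (hZ e).1 => K; exact: trace_partial_numop_exp.
have A_bound e : 0 <= A e <= c ^+ e.
  rewrite (cvg_moment_trunc_ge0 r_ge0 (cvgA e)) /=.
  by have [_] := hZ e; rewrite lecE => /andP[].
exists ((((M%:R)^-1 * nu) ^+ n * sum_moment A M n)%:C%C); split.
  apply: cvg_expect_is_real => [K|]; first exact: trace_partial_opprod_Vbar.
  by apply: cvgMl_tmp; exact: cvg_sum_moment_trunc.
by rewrite normc_real; exact: normr_mean_sum_moment_le.
Qed.
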